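(* Let $n,m\ge2$ with $n\mid m$ and $\gcd(m,n_0)=1$. Let $f\colon G_n\times G_m\to\{0,1\}$ satisfy $\max_{\gamma\in S,\,i,j<2}|u(\gamma,i,j)-v_f(\gamma,i,j)|<\delta$, where $v_f(\gamma,i,j)=|\{(x,y)\in G_n\times G_m: f(x,y)=i,\ f(\pi_n(\gamma)x,\pi_m(\gamma)y)=j\}|/(|G_n||G_m|)$. Then there exists $Z\subseteq G_n$ such that $|\{(x,y): f(x,y)\ne f_Z(x,y)\}|<\frac1{16}|G_n||G_m|$.
   Context: $d\ge2$; $S$ is a finite symmetric subset of $\mathrm{SL}_d(\mathbb{Z})$. $G_n:=\mathrm{SL}_d(\mathbb{Z}/n\mathbb{Z})$, $\pi_n$ is reduction mod $n$ (also $G_m\to G_n$ for $n\mid m$). For a finite group $G$ and $A,T\subseteq G$, $\partial(A,T)=\{a\in A: Ta\not\subseteq A\}$ and $h(G,T)=\min\{|\partial(A,T)|/|A|:\emptyset\neq A\subseteq G, |A|\le|G|/2\}$. Fix $n_0\in\mathbb{N}^+$ and $\epsilon>0$ such that $h(G_m,\pi_m(S))\ge\epsilon$ for all $m\ge2$ with $\gcd(m,n_0)=1$; $\delta:=\epsilon/(32|S|)$. $u(\gamma,i,j)=1/2$ if $i=j$ and $0$ otherwise ($\gamma\in S$, $i,j\in\{0,1\}$). For $Z\subseteq G_n$, $f_Z\colon G_n\times G_m\to\{0,1\}$ is $f_Z(x,y)=1$ if $\pi_n(y)^{-1}x\in Z$ and $0$ otherwise. *)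

From HB Require Import structures.
From mathcomp Require Import all_boot all_order all_algebra.
Set Implicit Arguments. Unset Strict Implicit. Unset Printing Implicit Defensive.
Import Order.TTheory GRing.Theory Num.Theory.
Local Open Scope ring_scope.

(* G_n = SL_d(Z/nZ), as the set of d x d matrices over 'Z_n with det 1
   (only used with n >= 2). *)
Definition SLset (d m : nat) : {set 'M['Z_m]_d} :=
  [set M : 'M['Z_m]_d | \det M == 1].

Definition redZ (d m : nat) (g : 'M[int]_d) : 'M['Z_m]_d :=
  map_mx (fun z : int => z%:~R) g.

Definition red (d n m : nat) (M : 'M['Z_m]_d) : 'M['Z_n]_d :=
  map_mx (fun a : 'Z_m => (nat_of_ord a)%:R) M.

Definition boundary (d m : nat) (A T : {set 'M['Z_m]_d}) : {set 'M['Z_m]_d} :=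
  [set a in A | [exists t in T, t *m a \notin A]].

(* h(G,T) = min { |∂(A,T)|/|A| : ∅ ≠ A ⊆ G, |A| ≤ |G|/2 }
   (value 1 if that family were empty, which never happens for G = G_m). *)
Definition cheeger (R : realFieldType) (d m : nat) (G T : {set 'M['Z_m]_d}) : R :=
  \big[Num.min/1]_(A : {set 'M['Z_m]_d} |
        [&& A \subset G, A != set0 & (#|A| * 2 <= #|G|)%N])
     ((#|boundary A T|)%:R / (#|A|)%:R).

Definition u (R : realFieldType) (i j : bool) : R := if i == j then 1 / 2 else 0.

Definition vf (R : realFieldType) (d n m : nat)
    (f : 'M['Z_n]_d -> 'M['Z_m]_d -> bool) (g : 'M[int]_d) (i j : bool) : R :=
  (#|[set p : 'M['Z_n]_d * 'M['Z_m]_d |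
        [&& p.1 \in SLset d n, p.2 \in SLset d m, f p.1 p.2 == i &
            f (redZ n g *m p.1) (redZ m g *m p.2) == j]]|)%:R
  / ((#|SLset d n| * #|SLset d m|)%N)%:R.

Definition fZ (d n m : nat) (Z : {set 'M['Z_n]_d})
    (x : 'M['Z_n]_d) (y : 'M['Z_m]_d) : bool :=
  (invmx (red n y) *m x) \in Z.

From HB Require Import structures.
From mathcomp Require Import all_boot all_order all_algebra.
From mathcomp Require Import zify ring.
Set Implicit Arguments. Unset Strict Implicit. Unset Printing Implicit Defensive.
Import Order.TTheory GRing.Theory Num.Theory.
Local Open Scope ring_scope.

(* Fibre each x in G_n over G_m by writing x = pi_n(y) z, and let Z be the set
   of z whose fibre {y : f(pi_n(y) z, y) = 1} covers more than half of G_m.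
   Then f differs from f_Z exactly on the minority part M_z of each fibre, and
   |M_z| <= |G_m|/2.  Expansion of G_m gives eps |M_z| <= |boundary M_z|, and
   every boundary point of M_z is a y where f switches value along an edge
   y -> gamma y.  Summing over z, eps times the number of disagreements is at
   most the number of switching pairs, i.e. at most
   sum_gamma (v_f(gamma,1,0) + v_f(gamma,0,1)) |G_n||G_m|.  Since
   u(gamma,i,1-i) = 0, each of these is below 2 delta |G_n||G_m|, and the total
   is below eps |G_n||G_m| / 16. *)

Lemma SL_mulmx d k (A B : 'M['Z_k]_d) :
  A \in SLset d k -> B \in SLset d k -> A *m B \in SLset d k.
Proof. by rewrite !inE det_mulmx => /eqP-> /eqP->; rewrite mulr1. Qed.

Lemma redZ_SL d k (g : 'M[int]_d) : \det g = 1 -> redZ k g \in SLset d k.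
Proof. by move=> detg; rewrite inE det_map_mx detg rmorph1. Qed.

Lemma card_SL_gt0 d k : (0 < #|SLset d k|)%N.
Proof. by apply/card_gt0P; exists 1%:M; rewrite inE det1. Qed.

Section Reduction.

Variables (d n m : nat).
Hypotheses (hn : (1 < n)%N) (hm : (1 < m)%N) (hnm : (n %| m)%N).

Lemma Zp_red_natr k : (((k%:R : 'Z_m) : nat)%:R : 'Z_n) = k%:R.
Proof. by rewrite val_Zp_nat // -(Zp_nat_mod hn) modn_dvdm // Zp_nat_mod. Qed.

Lemma Zp_red_rmorphism :
  exists phi : {rmorphism 'Z_m -> 'Z_n}, forall a, phi a = (a : nat)%:R.
Proof.
pose phi (a : 'Z_m) : 'Z_n := (a : nat)%:R.
have phi_natr k : phi k%:R = k%:R by apply: Zp_red_natr.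
have phi_add : nmod_morphism phi.
  split=> [|x y]; first by rewrite -[0 : 'Z_m]/(0%:R) phi_natr.
  by rewrite -[x]natr_Zp -[y]natr_Zp -natrD !phi_natr natrD.
have phi_mul : monoid_morphism phi.
  split=> [|x y]; first by rewrite -[1 : 'Z_m]/(1%:R) phi_natr.
  by rewrite -[x]natr_Zp -[y]natr_Zp -natrM !phi_natr natrM.
pose phiA := GRing.isNmodMorphism.Build _ _ phi phi_add.
pose phiM := GRing.isMonoidMorphism.Build _ _ phi phi_mul.
pose psi : {rmorphism _ -> _} := HB.pack phi phiA phiM.
by exists psi.
Qed.

Lemma red_map_mx :
  exists phi : {rmorphism 'Z_m -> 'Z_n}, forall M : 'M['Z_m]_d, red n M = map_mx phi M.
Proof.
have [phi phiE] := Zp_red_rmorphism.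
by exists phi => M; apply/matrixP=> i j; rewrite !mxE phiE.
Qed.

Lemma red_mulmx (A B : 'M['Z_m]_d) : red n (A *m B) = red n A *m red n B.
Proof. by have [phi redE] := red_map_mx; rewrite !redE map_mxM. Qed.

Lemma red_redZ (g : 'M[int]_d) : red n (redZ m g) = redZ n g.
Proof.
have [phi ->] := red_map_mx.
by apply/matrixP=> i j; rewrite !mxE rmorph_int.
Qed.

Lemma red_SL (M : 'M['Z_m]_d) : M \in SLset d m -> red n M \in SLset d n.
Proof.
have [phi ->] := red_map_mx.
by rewrite !inE det_map_mx => /eqP->; rewrite rmorph1.
Qed.

Lemma red_unitmx (M : 'M['Z_m]_d) : M \in SLset d m -> red n M \in unitmx.
Proof. by move/red_SL; rewrite inE unitmxE => /eqP->; apply: unitr1. Qed.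

End Reduction.

Lemma card_sum_indicator (T : finType) (X : {set T}) : #|X| = (\sum_x (x \in X : nat))%N.
Proof. by rewrite -sum1_card big_mkcond; apply: eq_bigr => x _; case: (x \in X). Qed.

Lemma card_setX_shear (T1 T2 : finType) (A : {set T1}) (B : {set T2})
    (h : T2 -> T1 -> T1) (P : T1 -> T2 -> bool) :
  (forall y, y \in B -> injective (h y)) ->
  (forall y z, y \in B -> (h y z \in A) = (z \in A)) ->
  #|[set p : T1 * T2 | [&& p.1 \in A, p.2 \in B & P p.1 p.2]]| =
  (\sum_(z in A) #|[set y in B | P (h y z) y]|)%N.
Proof.
move=> h_inj h_stab.
transitivity (\sum_x \sum_y ([&& x \in A, y \in B & P x y] : nat))%N.
  by rewrite card_sum_indicator pair_bigA; apply: eq_bigr => -[x y] _; rewrite inE.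
transitivity (\sum_z \sum_y ([&& z \in A, y \in B & P (h y z) y] : nat))%N; last first.
  rewrite [RHS]big_mkcond /=; apply: eq_bigr => z _.
  rewrite card_sum_indicator.
  by case: (z \in A); [apply: eq_bigr => y _; rewrite inE | rewrite big1].
rewrite exchange_big [RHS]exchange_big /=; apply: eq_bigr => y _.
have [yB | _] := boolP (y \in B); last by rewrite !big1 // => x _; rewrite andbF.
rewrite (reindex_inj (h_inj y yB)) /=.
by apply: eq_bigr => z _; rewrite h_stab.
Qed.

Lemma card_boundary_le d k (S : seq 'M[int]_d) (X : {set 'M['Z_k]_d}) :
  (#|boundary X [set:: map (@redZ d k) S]| <=
   \sum_(g <- undup S) #|[set y in X | redZ k g *m y \notin X]|)%N.
Proof.
rewrite card_sum_indicator.
under [X in (_ <= X)%N]eq_bigr => g _ do rewrite card_sum_indicator.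
rewrite exchange_big /=; apply: leq_sum => y _.
case: (boolP (y \in _)) => //; rewrite inE => /andP[yX /existsP[t /andP[]]].
rewrite inE => /mapP[g gS ->] gyX.
have gS' : g \in undup S by rewrite mem_undup.
by rewrite (bigD1_seq g) ?undup_uniq //= inE yX gyX.
Qed.

Lemma boundary_ge_cheeger (R : realFieldType) d k (G T X : {set 'M['Z_k]_d}) (eps : R) :
  eps <= cheeger R G T -> X \subset G -> (#|X| * 2 <= #|G|)%N ->
  eps * #|X|%:R <= #|boundary X T|%:R.
Proof.
move=> eps_le XG X_half.
have [-> | X_ne] := eqVneq X set0; first by rewrite cards0 mulr0.
have X_gt0 : (0 < #|X|)%N by rewrite card_gt0.
have : cheeger R G T <= #|boundary X T|%:R / #|X|%:R.
  by rewrite /cheeger (bigD1 X) /= ?ge_min ?lexx // XG X_ne X_half.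
by move/(le_trans eps_le); rewrite ler_pdivlMr ?ltr0n.
Qed.

Lemma sum_lt_of_lt_div (R : numFieldType) (I : eqType) (r : seq I) (F : I -> R) (c : R) :
  0 < c -> (forall i, i \in r -> F i < c / (size r)%:R) -> \sum_(i <- r) F i < c.
Proof.
case: r => [|a r] c_gt0 F_lt; first by rewrite big_nil.
rewrite big_seq; apply: (lt_le_trans (ltr_sum _ F_lt)); first by rewrite /= inE eqxx.
rewrite -big_seq big_const_seq count_predT iter_addr_0.
by rewrite -[_ *+ _]mulr_natr divfK ?pnatr_eq0.
Qed.

Section MajorityRule.

Variables (d n m : nat).
Hypotheses (hn : (1 < n)%N) (hm : (1 < m)%N) (hnm : (n %| m)%N).
Variable f : 'M['Z_n]_d -> 'M['Z_m]_d -> bool.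

Definition fibre_support (z : 'M['Z_n]_d) : {set 'M['Z_m]_d} :=
  [set y in SLset d m | f (red n y *m z) y].

Definition majority : {set 'M['Z_n]_d} :=
  [set z in SLset d n | (#|SLset d m| < #|fibre_support z| * 2)%N].

Definition minority (z : 'M['Z_n]_d) : {set 'M['Z_m]_d} :=
  [set y in SLset d m | f (red n y *m z) y != (z \in majority)].

Definition transitions (g : 'M[int]_d) (i j : bool) (z : 'M['Z_n]_d) : nat :=
  #|[set y in SLset d m | (f (red n y *m z) y == i) &&
      (f (red n (redZ m g *m y) *m z) (redZ m g *m y) == j)]|.

Lemma red_mulmx_inj (y : 'M['Z_m]_d) :
  y \in SLset d m -> injective (fun z : 'M['Z_n]_d => red n y *m z).
Proof. by move=> yG z1 z2 /(congr1 (mulmx (invmx (red n y)))); rewrite !mulKmx ?red_unitmx. Qed.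

Lemma red_mulmx_SL (y : 'M['Z_m]_d) (z : 'M['Z_n]_d) :
  y \in SLset d m -> (red n y *m z \in SLset d n) = (z \in SLset d n).
Proof. by move=> /(red_SL hn hm hnm); rewrite !inE det_mulmx => /eqP->; rewrite mul1r. Qed.

Lemma card_mismatch_majority :
  #|[set p : 'M['Z_n]_d * 'M['Z_m]_d |
      [&& p.1 \in SLset d n, p.2 \in SLset d m & f p.1 p.2 != fZ majority p.1 p.2]]| =
  (\sum_(z in SLset d n) #|minority z|)%N.
Proof.
rewrite (card_setX_shear (fun x y => f x y != fZ majority x y) red_mulmx_inj red_mulmx_SL).
apply: eq_bigr => z _; apply: eq_card => y; rewrite [LHS]inE [RHS]inE.
have [yG | //] := boolP (y \in SLset d m).
by rewrite /fZ mulKmx ?red_unitmx.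
Qed.

Lemma vf_transitions (R : realFieldType) (g : 'M[int]_d) (i j : bool) :
  vf R f g i j * (#|SLset d n| * #|SLset d m|)%:R =
  (\sum_(z in SLset d n) transitions g i j z)%:R.
Proof.
rewrite /vf divfK ?pnatr_eq0 -?lt0n ?muln_gt0 ?card_SL_gt0 //.
pose P x y := (f x y == i) && (f (redZ n g *m x) (redZ m g *m y) == j).
rewrite (card_setX_shear P red_mulmx_inj red_mulmx_SL); congr _%:R.
apply: eq_bigr => z _; apply: eq_card => y.
by rewrite !inE /P (red_mulmx hn hm hnm) (red_redZ hn hm hnm) mulmxA.
Qed.

Lemma minority_half (z : 'M['Z_n]_d) :
  z \in SLset d n -> (#|minority z| * 2 <= #|SLset d m|)%N.
Proof.
move=> zG.
have := cardsID (fibre_support z) (SLset d m).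
have -> : SLset d m :&: fibre_support z = fibre_support z.
  by apply/setIidPr/subsetP => y; rewrite inE => /andP[].
have [zZ | zZ] := boolP (z \in majority).
- have -> : minority z = SLset d m :\: fibre_support z.
    apply/setP => y; rewrite /minority zZ !inE.
    by case: (\det y == 1) => //=; case: (f _ y).
  by move: zZ; rewrite inE zG /=; lia.
- have -> : minority z = fibre_support z.
    apply/setP => y; rewrite /minority (negbTE zZ) !inE.
    by case: (\det y == 1) => //=; case: (f _ y).
  by move: zZ; rewrite inE zG /= -leqNgt; lia.
Qed.

Lemma card_minority_exits (g : 'M[int]_d) (z : 'M['Z_n]_d) : \det g = 1 ->
  #|[set y in minority z | redZ m g *m y \notin minority z]| =
  transitions g (~~ (z \in majority)) (z \in majority) z.
Proof.
move=> detg; apply: eq_card => y; rewrite /minority; move: (z \in majority) => b.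
have [yG | yG] := boolP (y \in SLset d m); last by rewrite !inE in yG *; rewrite (negbTE yG).
have gyG := SL_mulmx (redZ_SL m detg) yG.
rewrite !inE in yG gyG *; rewrite yG gyG /=.
by case: b; case: (f _ y); case: (f _ (_ *m y)).
Qed.

Lemma minority_le_transitions (R : realFieldType) (S : seq 'M[int]_d) (eps : R)
    (z : 'M['Z_n]_d) :
  (forall g, g \in S -> \det g = 1) ->
  eps <= cheeger R (SLset d m) [set:: map (@redZ d m) S] -> z \in SLset d n ->
  eps * #|minority z|%:R <=
  (\sum_(g <- undup S) (transitions g true false z + transitions g false true z))%:R.
Proof.
move=> detS eps_le zG.
have minority_sub : minority z \subset SLset d m.
  by apply/subsetP => y; rewrite inE => /andP[].
apply: le_trans (boundary_ge_cheeger eps_le minority_sub (minority_half zG)) _.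
rewrite ler_nat; apply: leq_trans (card_boundary_le S _) _.
rewrite !big_seq; apply: leq_sum => g; rewrite mem_undup => gS.
rewrite card_minority_exits ?detS //.
by case: (z \in majority); rewrite ?leq_addl ?leq_addr.
Qed.

Lemma mismatch_majority_le_vf (R : realFieldType) (S : seq 'M[int]_d) (eps : R) :
  (forall g, g \in S -> \det g = 1) ->
  eps <= cheeger R (SLset d m) [set:: map (@redZ d m) S] ->
  eps * (#|[set p : 'M['Z_n]_d * 'M['Z_m]_d |
      [&& p.1 \in SLset d n, p.2 \in SLset d m & f p.1 p.2 != fZ majority p.1 p.2]]|)%:R <=
  \sum_(g <- undup S) (vf R f g true false + vf R f g false true) *
    (#|SLset d n| * #|SLset d m|)%:R.
Proof.
move=> detS eps_le.
rewrite card_mismatch_majority natr_sum mulr_sumr.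
apply: le_trans (ler_sum _ (fun z => minority_le_transitions detS eps_le)) _.
rewrite -natr_sum exchange_big natr_sum /=; apply: ler_sum => g _.
by rewrite mulrDl !vf_transitions -natrD big_split.
Qed.

End MajorityRule.

Theorem claim1 (R : realFieldType) (d : nat) (hd : (2 <= d)%N)
  (S : seq 'M[int]_d)
  (hSdet : forall g, g \in S -> \det g = 1)
  (hSsym : forall g, g \in S -> invmx g \in S)
  (n0 : nat) (hn0 : (0 < n0)%N) (eps : R) (heps : 0 < eps)
  (hexp : forall m : nat, (2 <= m)%N -> coprime m n0 ->
     eps <= cheeger R (SLset d m) [set:: map (@redZ d m) S])
  (n m : nat) (hn : (2 <= n)%N) (hm : (2 <= m)%N) (hnm : (n %| m)%N)
  (hcop : coprime m n0)
  (f : 'M['Z_n]_d -> 'M['Z_m]_d -> bool)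
  (hf : forall g, g \in S -> forall i j : bool,
     `|u R i j - vf R f g i j| < eps / (32 * (size (undup S))%:R)) :
  exists Z : {set 'M['Z_n]_d}, Z \subset SLset d n /\
    (#|[set p : 'M['Z_n]_d * 'M['Z_m]_d |
        [&& p.1 \in SLset d n, p.2 \in SLset d m &
            f p.1 p.2 != fZ Z p.1 p.2]]|)%:R
    < (1 / 16 : R) * ((#|SLset d n| * #|SLset d m|)%N)%:R.
Proof.
set N : R := (#|SLset d n| * #|SLset d m|)%:R.
set s : R := (size (undup S))%:R.
have N_gt0 : 0 < N by rewrite ltr0n muln_gt0 !card_SL_gt0.
exists (@majority d n m f); split; first by apply/subsetP => z; rewrite inE => /andP[].
rewrite -(ltr_pM2l heps).
apply: le_lt_trans (mismatch_majority_le_vf hn hm hnm f hSdet (hexp m hm hcop)) _.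
apply: sum_lt_of_lt_div => [|g].
  by rewrite pmulr_rgt0 // pmulr_lgt0 // divr_gt0 ?ltr0n.
rewrite mem_undup => gS.
have s_gt0 : 0 < s.
  by rewrite ltr0n lt0n size_eq0; apply: contraTneq gS => S0; rewrite -mem_undup S0.
have vf_switch_lt i : vf R f g i (~~ i) < eps / (32 * s).
  have := hf g gS i (~~ i); rewrite /u; case: i => /=;
  by rewrite sub0r normrN ger0_norm // divr_ge0 ?ler0n.
have -> : eps * (1 / 16 * N) / s = (eps / (32 * s) + eps / (32 * s)) * N.
  by field; rewrite lt0r_neq0.
by rewrite ltr_pM2r // ltrD ?(vf_switch_lt true) ?(vf_switch_lt false).
Qed.
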